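(* Let $\mathbbm{k}$ be a field and $n\ge 2$. The ideal $J_n\subset R$ is a mesoprime binomial ideal whose associated lattice is $L'_n$; that is, \[J_n=\langle x^{u^+}-x^{u^-} : u\in L'_n\rangle,\] so that $R/J_n$ is the group-algebra-type quotient attached to $L'_n$ (the lattice ideal of $L'_n$).
   Context: $R=\mathbbm{k}[x_{ij}:1\le i\le j\le n]$ with the convention $x_{ij}=x_{ji}$; exponent vectors live in $\mathbb{N}^{\binom{n+1}{2}}$ with standard basis $e_{ij}$ ($e_{ij}=e_{ji}$). For $u\in\mathbb{Z}^{\binom{n+1}{2}}$, $u=u^+-u^-$ with $u^+,u^-\ge 0$ of disjoint support. $J_n$ is the ideal generated by all principal $2$-minors $x_{ii}x_{jj}-x_{ij}^2$ ($i,j\in[n]$) of the symmetric matrix $(x_{ij})$. For $i,j,k,l\in[n]$, $[ij|kl]:=e_{ik}+e_{jl}-e_{il}-e_{jk}$, and $L'_n$ is the lattice generated by the $[ij|ij]$, $i,j\in[n]$. (A mesoprime binomial ideal without monomials, in the sense of Kahle–Miller, with associated lattice $L$ and trivial character is exactly the lattice ideal $\langle x^{u^+}-x^{u^-}:u\in L\rangle$.) *)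

From HB Require Import structures.
From mathcomp Require Import all_boot all_order all_algebra.
From mathcomp Require Import mpoly.
Set Implicit Arguments. Unset Strict Implicit. Unset Printing Implicit Defensive.
Import Order.TTheory GRing.Theory Num.Theory.
Local Open Scope ring_scope.

(* Index set of the variables x_ij, 1 <= i <= j <= n (0-based here). *)
Definition symidx (n : nat) := {p : 'I_n * 'I_n | (p.1 <= p.2)%N}.

Definition spair n (i j : 'I_n) : 'I_n * 'I_n :=
  if (i <= j)%N then (i, j) else (j, i).

Lemma spair_ok n (i j : 'I_n) : ((spair i j).1 <= (spair i j).2)%N.
Proof. rewrite /spair; case: (leqP i j) => h //=; exact: ltnW. Qed.

Definition sym n (i j : 'I_n) : symidx n := exist _ (spair i j) (spair_ok i j).

(* the polynomial ring R = k[x_ij : i <= j] *)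
Definition Rpoly (k : fieldType) (n : nat) := {mpoly k[#|{: symidx n}|]}.

Definition xv (k : fieldType) n (t : symidx n) : Rpoly k n := 'X_(enum_rank t).
Definition xx (k : fieldType) n (i j : 'I_n) : Rpoly k n := xv k (sym i j).

Definition mono (k : fieldType) n (a : symidx n -> nat) : Rpoly k n :=
  \prod_(t : symidx n) xv k t ^+ a t.

Definition evec n := {ffun symidx n -> int}.
Definition ee n (t0 : symidx n) : evec n := [ffun t => ((t == t0) : nat)%:Z].
Definition eij n (i j : 'I_n) : evec n := ee (sym i j).

Definition bracket n (i j k l : 'I_n) : evec n :=
  eij i k + eij j l - eij i l - eij j k.

Definition inLp n (u : evec n) : Prop :=
  exists c : 'I_n -> 'I_n -> int,
    u = \sum_(i < n) \sum_(j < n) bracket i j i j *~ c i j.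

Definition upos n (u : evec n) (t : symidx n) : nat := `|Num.max (u t) 0|%N.
Definition uneg n (u : evec n) (t : symidx n) : nat := `|Num.max (- u t) 0|%N.

Definition lbinom (k : fieldType) n (u : evec n) : Rpoly k n :=
  mono k (upos u) - mono k (uneg u).

Definition in_ideal (A : comNzRingType) (S : A -> Prop) (p : A) : Prop :=
  exists s : seq (A * A),
    (forall q, q \in s -> S q.2) /\ p = \sum_(q <- s) q.1 * q.2.

Definition Jgen (k : fieldType) n (p : Rpoly k n) : Prop :=
  exists i j : 'I_n, p = xx k i i * xx k j j - xx k i j ^+ 2.

Definition Lgen (k : fieldType) n (p : Rpoly k n) : Prop :=
  exists u : evec n, inLp u /\ p = lbinom k u.

From HB Require Import structures.
From mathcomp Require Import all_boot all_order all_algebra.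
From mathcomp Require Import mpoly zify.
Set Implicit Arguments. Unset Strict Implicit. Unset Printing Implicit Defensive.
Import Order.TTheory GRing.Theory Num.Theory.
Local Open Scope ring_scope.

(* Each generator x_ii x_jj - x_ij^2 of J_n is the binomial of [ij|ij], so J_n
   lies in the lattice ideal.  Conversely, every u in L'_n is balanced: its
   off-diagonal entries are even and 2 u_ll + sum_(m != l) u_lm = 0 for every l.
   Modulo J_n one may trade x_ij^2 for x_ii x_jj; this adds [ij|ij] to the
   exponent, so keeps the difference of exponents balanced, and lowers the
   off-diagonal degree.  When both exponents of x^a - x^b have off-diagonal
   entries at most 1, balancedness forces the off-diagonal entries to agree,
   and then the row equations force the diagonal ones to agree too. *)

Section InIdeal.
Variable A : comNzRingType.
Implicit Types (S T : A -> Prop) (p q r : A).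

Lemma in_ideal0 S : in_ideal S 0.
Proof. by exists [::]; rewrite big_nil. Qed.

Lemma in_idealD S p q : in_ideal S p -> in_ideal S q -> in_ideal S (p + q).
Proof.
move=> [s1 [S1 ->]] [s2 [S2 ->]]; exists (s1 ++ s2); rewrite big_cat; split=> //.
by move=> x; rewrite mem_cat => /orP[/S1|/S2].
Qed.

Lemma in_idealMl S r p : in_ideal S p -> in_ideal S (r * p).
Proof.
move=> [s [Ss ->]]; exists [seq (r * x.1, x.2) | x <- s]; split.
  by move=> _ /mapP[x /Ss ? ->].
by rewrite big_map mulr_sumr; apply: eq_bigr => x _; rewrite mulrA.
Qed.

Lemma in_idealN S p : in_ideal S p -> in_ideal S (- p).
Proof. by rewrite -mulN1r; apply: in_idealMl. Qed.

Lemma in_idealB S p q : in_ideal S p -> in_ideal S q -> in_ideal S (p - q).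
Proof. by move=> Sp /in_idealN; apply: in_idealD. Qed.

Lemma in_ideal_gen S p : S p -> in_ideal S p.
Proof.
by move=> Sp; exists [:: (1, p)]; rewrite big_seq1 mul1r; split=> // q /[!inE] /eqP->.
Qed.

Lemma in_ideal_trans S T p :
  (forall q, S q -> in_ideal T q) -> in_ideal S p -> in_ideal T p.
Proof.
move=> ST [s [Ss ->]]; elim: s Ss => [|x s IHs] Ss; first by rewrite big_nil; apply: in_ideal0.
rewrite big_cons; apply: in_idealD; first by apply/in_idealMl/ST/Ss; rewrite mem_head.
by apply: IHs => y ys; apply: Ss; rewrite inE ys orbT.
Qed.

End InIdeal.
Section SymIdx.
Variable n : nat.
Implicit Types (i j l m : 'I_n) (s t : symidx n).

Definition offdiag t := (val t).1 != (val t).2.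

Lemma sym_val t : t = sym (val t).1 (val t).2.
Proof. by case: t => [[i j] le_ij]; apply: val_inj; rewrite /= /spair le_ij. Qed.

Lemma symC i j : sym i j = sym j i.
Proof.
by apply: val_inj; rewrite /= /spair; case: ltngtP => // /val_inj ->.
Qed.

Lemma eq_sym_idx i j l m :
  (sym i j == sym l m) = (i == l) && (j == m) || (i == m) && (j == l).
Proof.
apply/eqP/idP => [/(congr1 val)|].
  by rewrite /= /spair; do 2!case: leqP => _; case=> -> ->; rewrite !eqxx ?orbT.
by case/orP => /andP[/eqP-> /eqP->] //; apply: symC.
Qed.

Lemma offdiag_sym i j : offdiag (sym i j) = (i != j).
Proof. by rewrite /offdiag /= /spair; case: leqP => //= _; rewrite eq_sym. Qed.

Lemma offdiag_neq_diag t l : offdiag t -> (t == sym l l) = false.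
Proof. by apply: contraTF => /eqP->; rewrite offdiag_sym negbK. Qed.

Lemma bracketE i j s : bracket i j i j s =
  ((s == sym i i) : nat)%:Z + ((s == sym j j) : nat)%:Z - 2 * ((s == sym i j) : nat)%:Z.
Proof.
rewrite /bracket /eij /ee !ffunE (symC j i).
by case: (s == sym i i); case: (s == sym j j); case: (s == sym i j).
Qed.

Lemma bracket_in_Lp i j : inLp (bracket i j i j).
Proof.
exists (fun l m => ((l == i) && (m == j) : nat)%:Z).
rewrite (bigD1 i) //= (bigD1 j) //= !eqxx mulr1z !big1 ?addr0 // => [l /negbTE li|m /negbTE mj].
  by rewrite big1 // => m _; rewrite li mulr0z.
by rewrite mj mulr0z.
Qed.

Definition balanced (u : evec n) : bool :=
  [forall t, offdiag t ==> (2 %| u t)%Z] &&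
  [forall l, u (sym l l) + \sum_m u (sym l m) == 0].

Lemma balanced_zmod_closed : zmod_closed balanced.
Proof.
split=> [|u v /andP[/forallP u2 /forallP u0] /andP[/forallP v2 /forallP v0]].
  apply/andP; split; apply/forallP => x; rewrite ffunE.
    by rewrite dvdz0 implybT.
  by rewrite big1 ?addr0 // => m _; rewrite ffunE.
apply/andP; split; apply/forallP => x; rewrite !ffunE.
  by apply/implyP => ot; rewrite rpredB ?(implyP (u2 x)) ?(implyP (v2 x)).
under eq_bigr do rewrite !ffunE.
by rewrite sumrB addrACA (eqP (u0 x)) -opprD (eqP (v0 x)) subrr.
Qed.

End SymIdx.
Arguments balanced {n}.

HB.instance Definition _ n := GRing.isZmodClosed.Build (evec n) (@balanced n)
  (@balanced_zmod_closed n).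

Lemma bracket_balanced n (i j : 'I_n) : bracket i j i j \in balanced.
Proof.
have [<-|ij] := eqVneq i j.
  have -> : bracket i i i i = 0 by apply/ffunP => s; rewrite bracketE ffunE; case: eqP.
  exact: rpred0.
apply/andP; split; apply/forallP => x.
  apply/implyP => ox; rewrite bracketE !offdiag_neq_diag //.
  by rewrite rpredB ?dvdz_mulr.
rewrite (bigD1 i) //= (bigD1 j) 1?eq_sym //= big1 => [|m /andP[mi mj]]; last first.
  by rewrite bracketE !eq_sym_idx (negbTE mi) (negbTE mj) !andbF.
rewrite !bracketE !eq_sym_idx (eq_sym j i) (negbTE ij) !eqxx /= !andbb !orbb.
by have [->|_] := eqVneq x i; rewrite ?(negbTE ij) //; case: (x == j).
Qed.

Lemma Lp_balanced n (u : evec n) : inLp u -> u \in balanced.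
Proof.
move=> [c ->]; apply: rpred_sum => i _; apply: rpred_sum => j _.
exact/rpredMz/bracket_balanced.
Qed.

Section Exponents.
Variable n : nat.
Implicit Types (i j l m : 'I_n) (s t : symidx n) (a b : symidx n -> nat).

Definition expdiff a b : evec n := [ffun s => (a s)%:Z - (b s)%:Z].

Lemma expdiff_upos_uneg (u : evec n) : expdiff (upos u) (uneg u) = u.
Proof. by apply/ffunP => s; rewrite ffunE /upos /uneg; move: (u s) => z; lia. Qed.

Definition offdeg a := (\sum_t offdiag t * a t)%N.

Definition offdiag_sqfree a := [forall t, offdiag t ==> (a t <= 1)%N].

Lemma offdiag_sqfreePn a :
  ~~ offdiag_sqfree a -> exists i j, i != j /\ (1 < a (sym i j))%N.
Proof.
case/forallPn => t; rewrite negb_imply -ltnNge => /andP[ot a_t].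
by exists (val t).1, (val t).2; rewrite -sym_val.
Qed.

Lemma sqfree_balanced_eq a b : offdiag_sqfree a -> offdiag_sqfree b ->
  expdiff a b \in balanced -> a =1 b.
Proof.
move=> /forallP a1 /forallP b1 /andP[/forallP even /forallP row].
have off t : offdiag t -> a t = b t.
  move=> ot; have := implyP (a1 t) ot; have := implyP (b1 t) ot.
  by have := implyP (even t) ot; rewrite ffunE; lia.
have diag l : a (sym l l) = b (sym l l).
  have := eqP (row l); rewrite (bigD1 l) //= big1 => [|m ml]; first by rewrite !ffunE; lia.
  by rewrite ffunE off ?subrr // offdiag_sym eq_sym.
move=> s; have [/off//|/negPn/eqP s_diag] := boolP (offdiag s).
by rewrite (sym_val s) s_diag diag.
Qed.

Definition straighten a i j s :=
  (a s - 2 * (s == sym i j) + ((s == sym i i) + (s == sym j j)))%N.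

Section Straighten.
Variables (a : symidx n -> nat) (i j : 'I_n).
Hypotheses (neq_ij : i != j) (a_ij : (1 < a (sym i j))%N).

Let offdiag_ij : offdiag (sym i j). Proof. by rewrite offdiag_sym. Qed.

Lemma straightenE s : (straighten a i j s)%:Z = (a s)%:Z + bracket i j i j s.
Proof.
rewrite bracketE /straighten; have [->|_] := eqVneq s (sym i j); last by lia.
by rewrite !offdiag_neq_diag //; lia.
Qed.

Lemma offdeg_straighten : (offdeg (straighten a i j) < offdeg a)%N.
Proof.
rewrite /offdeg (bigD1 (sym i j)) //= [X in (_ < X)%N](bigD1 (sym i j)) //=.
rewrite offdiag_ij /straighten eqxx !offdiag_neq_diag // -addSn leq_add //; first by lia.
apply: leq_sum => s /negbTE s_ij; case os: (offdiag s) => //=.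
by rewrite s_ij !offdiag_neq_diag // addn0 subn0.
Qed.

End Straighten.

End Exponents.

Section Binomials.
Variables (k : fieldType) (n : nat).
Implicit Types (i j : 'I_n) (t : symidx n) (a b : symidx n -> nat).
Local Notation J := (in_ideal (@Jgen k n)).

Lemma eq_mono a b : a =1 b -> mono k a = mono k b.
Proof. by move=> eq_ab; apply: eq_bigr => t _; rewrite eq_ab. Qed.

Lemma monoD a b : mono k (fun t => a t + b t)%N = mono k a * mono k b.
Proof. by rewrite /mono -big_split; apply: eq_bigr => t _; rewrite exprD. Qed.

Lemma mono_delta t0 e : mono k (fun t => e * (t == t0))%N = xv k t0 ^+ e.
Proof.
rewrite /mono (bigD1 t0) //= eqxx muln1 big1 ?mulr1 // => t /negbTE->.
by rewrite muln0 expr0.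
Qed.

Lemma mono_delta1 t0 : mono k (fun t => (t == t0 : nat)) = xv k t0.
Proof. by rewrite -[RHS]expr1 -mono_delta; apply: eq_mono => t; rewrite mul1n. Qed.

Lemma straighten_in_J a i j : i != j -> (1 < a (sym i j))%N ->
  J (mono k a - mono k (straighten a i j)).
Proof.
move=> neq_ij a_ij; pose c t := (a t - 2 * (t == sym i j))%N.
have -> : mono k a = mono k c * xx k i j ^+ 2.
  rewrite /xx -mono_delta -monoD; apply: eq_mono => t; rewrite /c.
  by have [->|] := eqVneq t (sym i j); rewrite ?muln0 ?subn0 ?addn0 // muln1 subnK.
have -> : mono k (straighten a i j) = mono k c * (xx k i i * xx k j j).
  by rewrite (monoD c) (monoD (fun t => t == sym i i)) !mono_delta1.
rewrite -mulrBr -opprB mulrN -mulNr; apply/in_idealMl/in_ideal_gen.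
by exists i, j.
Qed.

Lemma binomial_in_J a b : expdiff a b \in balanced -> J (mono k a - mono k b).
Proof.
have [N] := ubnP (offdeg a + offdeg b); elim: N a b => // N IHN a b size_ab bal.
have [sq_a|/offdiag_sqfreePn[i [j [neq_ij a_ij]]]] := boolP (offdiag_sqfree a).
  have [sq_b|/offdiag_sqfreePn[i [j [neq_ij b_ij]]]] := boolP (offdiag_sqfree b).
    by rewrite (eq_mono (sqfree_balanced_eq sq_a sq_b bal)) subrr; apply: in_ideal0.
  pose b' := straighten b i j.
  have -> : mono k a - mono k b = (mono k a - mono k b') - (mono k b - mono k b').
    by rewrite opprB addrA subrK.
  apply: in_idealB; last exact: straighten_in_J.
  apply: IHN; first by have := offdeg_straighten neq_ij b_ij; rewrite -/b'; lia.
  have -> : expdiff a b' = expdiff a b - bracket i j i j.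
    by apply/ffunP => t; rewrite [LHS]ffunE straightenE // !ffunE opprD addrA.
  by rewrite rpredB ?bracket_balanced.
pose a' := straighten a i j.
have -> : mono k a - mono k b = (mono k a - mono k a') + (mono k a' - mono k b).
  by rewrite addrA subrK.
apply: in_idealD; first exact: straighten_in_J.
apply: IHN; first by have := offdeg_straighten neq_ij a_ij; rewrite -/a'; lia.
have -> : expdiff a' b = expdiff a b + bracket i j i j.
  by apply/ffunP => t; rewrite [LHS]ffunE straightenE // !ffunE addrAC.
by rewrite rpredD ?bracket_balanced.
Qed.

Lemma lbinom_bracket i j : i != j ->
  lbinom k (bracket i j i j) = xx k i i * xx k j j - xx k i j ^+ 2.
Proof.
move=> neq_ij; rewrite /lbinom /xx -mono_delta -!mono_delta1 -monoD.
congr (_ - _); apply: eq_mono => t; rewrite /upos /uneg bracketE.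
all: have [->|_] := eqVneq t (sym i j); first by rewrite !offdiag_neq_diag ?offdiag_sym.
all: have [->|_] := eqVneq t (sym i i); last by case: (t == sym j j).
all: by rewrite eq_sym_idx (negbTE neq_ij).
Qed.

End Binomials.

Theorem proposition2p4 (k : fieldType) (n : nat) (hn : (2 <= n)%N) :
  forall p : Rpoly k n, in_ideal (@Jgen k n) p <-> in_ideal (@Lgen k n) p.
Proof.
move=> p; split; apply: in_ideal_trans => q.
- move=> [i [j ->]]; have [<-|neq_ij] := eqVneq i j.
    by rewrite expr2 subrr; apply: in_ideal0.
  apply: in_ideal_gen; exists (bracket i j i j).
  by rewrite lbinom_bracket //; split=> //; apply: bracket_in_Lp.
- move=> [u [Lp_u ->]].
  by apply: binomial_in_J; rewrite expdiff_upos_uneg Lp_balanced.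
Qed.
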